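(* Let $\mathcal{G}$ be a connected undirected graph with $n$ nodes and $m$ edges and incidence matrix $B\in\mathbb{R}^{n\times m}$, let $p\ge 1$, $E=\begin{bmatrix} I_{p}\\ \mathbf{0}_{(n-p)\times p}\end{bmatrix}$, $d\in\mathbb{R}^n$, $Q=\operatorname{diag}(q_1,\dots,q_p)$ with all $q_i>0$, $r\in\mathbb{R}^p$, $s\in\mathbb{R}$, and $C(u)=\frac12 u^TQu+r^Tu+s$. Consider the optimization problem $$\min_{u\in\mathbb{R}^p,\ \lambda\in\mathbb{R}^m} C(u)\quad\text{subject to}\quad \mathbf{0}=-B\lambda+Eu-d.$$ Its solution (in the variable $u$) is given by $\overline u=Q^{-1}(\kappa-r)$, where $$\kappa=E^T\frac{\mathbb{1}_n\mathbb{1}_n^T}{\mathbb{1}_p^TQ^{-1}\mathbb{1}_p}\,(d+EQ^{-1}r).$$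
   Context: $\mathbb{1}_k$ denotes the all-ones vector of length $k$. The incidence matrix $B=(b_{ik})$ is obtained by arbitrarily orienting each edge and setting $b_{ik}=+1$ if node $i$ is the positive end of edge $k$, $-1$ if it is the negative end, and $0$ otherwise. *)

From HB Require Import structures.
From mathcomp Require Import all_boot all_order all_algebra.
Set Implicit Arguments. Unset Strict Implicit. Unset Printing Implicit Defensive.
Import Order.TTheory GRing.Theory Num.Theory.
Local Open Scope ring_scope.

(* A graph on nodes 'I_n with m edges; edge k is oriented from (ends k).1
   (positive end) to (ends k).2 (negative end). *)
Definition graph_adj (n m : nat) (ends : 'I_m -> 'I_n * 'I_n) : rel 'I_n :=
  fun x y => [exists k, (ends k == (x, y)) || (ends k == (y, x))].

Definition incidence (R : ringType) (n m : nat) (ends : 'I_m -> 'I_n * 'I_n)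
  : 'M[R]_(n, m) :=
  \matrix_(i < n, k < m)
    (if i == (ends k).1 then 1 else if i == (ends k).2 then -1 else 0).

Definition selE (R : ringType) (n p : nat) : 'M[R]_(n, p) :=
  \matrix_(i < n, j < p) ((i : nat) == (j : nat))%:R.

Definition cost (R : fieldType) (p : nat) (Q : 'M[R]_p) (r : 'cV[R]_p) (s : R)
  (u : 'cV[R]_p) : R :=
  2^-1 * (u^T *m Q *m u) 0 0 + (r^T *m u) 0 0 + s.

(* Since the graph is connected, the column space of the incidence matrix is
   exactly the hyperplane of zero-sum vectors, so u is feasible iff
   1^T u = 1^T d.  On that hyperplane
   the cost is minimised where its gradient Q u + r is a constant vector
   K 1: kappa is this vector, K being fixed by the balance condition
   1^T Q^-1 (K 1 - r) = 1^T d.  Expanding C around ubar then gives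
   C u = C ubar + 1/2 (u - ubar)^T Q (u - ubar) for every feasible u. *)

From mathcomp Require Import all_boot all_order all_algebra.
From mathcomp Require Import ring.
Import Order.TTheory GRing.Theory Num.Theory.
Set Implicit Arguments. Unset Strict Implicit. Unset Printing Implicit Defensive.
Local Open Scope ring_scope.

Lemma ones_mul_selE (R : nzRingType) n p : (p <= n)%N ->
  (const_mx 1 : 'rV[R]_n) *m selE R n p = const_mx 1.
Proof.
move=> le_pn; apply/rowP => j; rewrite !mxE (bigD1 (widen_ord le_pn j)) //=.
rewrite big1 => [|i ne_ij]; first by rewrite !mxE eqxx mul1r addr0.
rewrite !mxE mul1r; case: eqP => // eq_ij.
by case/eqP: ne_ij; apply: val_inj.
Qed.

Section Incidence.
Variables (R : fieldType) (n m : nat) (ends : 'I_m -> 'I_n * 'I_n).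
Hypothesis ends_loopfree : forall k, (ends k).1 != (ends k).2.
Local Notation B := (incidence R ends).

Lemma ones_mul_incidence : (const_mx 1 : 'rV[R]_n) *m B = 0.
Proof.
apply/rowP => k; rewrite !mxE (bigD1 (ends k).1) //= (bigD1 (ends k).2) //=.
  rewrite big1 => [|i /andP[ni1 ni2]]; last first.
    by rewrite !mxE (negbTE ni1) (negbTE ni2) mulr0.
  rewrite !mxE eqxx eq_sym (negbTE (ends_loopfree k)) eqxx.
  by rewrite !mul1r addr0 subrr.
by rewrite eq_sym ends_loopfree.
Qed.

Lemma row_tr_incidence k :
  row k B^T = delta_mx 0 (ends k).1 - delta_mx 0 (ends k).2.
Proof.
apply/rowP => i; rewrite !mxE /=.
have [->|ni1] := eqVneq i (ends k).1.
  by rewrite (negbTE (ends_loopfree k)) subr0.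
by case: (i == _); rewrite /= ?subrr ?sub0r.
Qed.

Lemma delta_sub_incidence_adj x y : graph_adj ends x y ->
  ((delta_mx 0 x : 'rV[R]_n) - delta_mx 0 y <= B^T)%MS.
Proof.
case/existsP => k /orP[] /eqP ends_k; have := row_sub k B^T;
  rewrite row_tr_incidence ends_k //=.
by rewrite -(eqmx_opp (_ - _)) opprB.
Qed.

Hypothesis ends_connected : forall x y : 'I_n, connect (graph_adj ends) x y.

Lemma delta_sub_incidence x y :
  ((delta_mx 0 x : 'rV[R]_n) - delta_mx 0 y <= B^T)%MS.
Proof.
have /connectP [s xs ->] := ends_connected x y.
elim: s x xs => [|z s IHs] x /=; first by rewrite subrr sub0mx.
case/andP => /delta_sub_incidence_adj xz /IHs zs.
by rewrite -(subrK (delta_mx 0 z) (delta_mx 0 x)) -addrA addmx_sub.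
Qed.

Lemma incidence_rangeP (x : 'cV[R]_n) :
  (exists lam, x = B *m lam) <-> (const_mx 1 : 'rV[R]_n) *m x = 0.
Proof.
split => [[lam ->]|sum_x0]; first by rewrite mulmxA ones_mul_incidence mul0mx.
have [o _|no_node] := pickP (@predT 'I_n); last first.
  by exists 0; apply/matrixP => i; have := no_node i.
have sumx0 : \sum_i x^T 0 i = 0.
  have := congr1 (fun M : 'M_1 => M 0 0) sum_x0; rewrite !mxE => sum_x0'.
  by rewrite -[RHS]sum_x0'; apply: eq_bigr => i _; rewrite !mxE mul1r.
suff /submxP[D xD] : (x^T <= B^T)%MS.
  by exists D^T; rewrite -[x]trmxK xD trmx_mul trmxK.
rewrite [x^T]row_sum_delta.
have -> : \sum_i x^T 0 i *: delta_mx 0 i =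
          \sum_i x^T 0 i *: (delta_mx 0 i - delta_mx 0 o :> 'rV[R]_n).
  under [RHS]eq_bigr do rewrite scalerBr.
  by rewrite sumrB -scaler_suml sumx0 scale0r subr0.
by apply: summx_sub => i _; rewrite scalemx_sub ?delta_sub_incidence.
Qed.

Lemma flow_feasibleP p (le_pn : (p <= n)%N) (d : 'cV[R]_n) (u : 'cV[R]_p) :
  (exists lam, 0 = - (B *m lam) + selE R n p *m u - d) <->
  (const_mx 1 : 'rV[R]_p) *m u = const_mx 1 *m d.
Proof.
have zero_eq (a x : 'cV[R]_n) : (0 = - a + x) <-> (x = a).
  by split=> [/esym/addr0_eq <-|->]; rewrite ?opprK ?addNr.
apply: (@iff_trans _ (exists lam, selE R n p *m u - d = B *m lam)).
  by split=> -[lam feas]; exists lam; move: feas; rewrite -addrA zero_eq.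
apply: iff_trans (incidence_rangeP _) _.
rewrite mulmxBr mulmxA ones_mul_selE //.
by split=> [/eqP|->]; rewrite ?subr_eq0 ?subrr // => /eqP.
Qed.

End Incidence.

Section DiagonalInverse.
Variables (R : fieldType) (p : nat) (q : 'rV[R]_p).
Hypothesis q_neq0 : forall j, q 0 j != 0.

Lemma unitmx_diag : diag_mx q \in unitmx.
Proof. by rewrite unitmxE det_diag unitfE; apply/prodf_neq0 => j _. Qed.

Lemma invmx_diag : invmx (diag_mx q) = diag_mx (\row_j (q 0 j)^-1).
Proof.
have mul_qV : diag_mx q *m diag_mx (\row_j (q 0 j)^-1) = 1%:M.
  rewrite mulmx_diag -diag_const_mx; congr diag_mx.
  by apply/rowP => j; rewrite !mxE mulfV.
by rewrite -[LHS]mulmx1 -mul_qV mulKmx ?unitmx_diag.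
Qed.

End DiagonalInverse.

Lemma diag_form (R : comPzRingType) p (q : 'rV[R]_p) (w : 'cV[R]_p) :
  (w^T *m diag_mx q *m w) 0 0 = \sum_j q 0 j * w j 0 ^+ 2.
Proof.
by rewrite -mulmxA mul_diag_mx !mxE; apply: eq_bigr => j _; rewrite !mxE mulrCA.
Qed.

Lemma diag_form_ge0 (R : realDomainType) p (q : 'rV[R]_p) (w : 'cV[R]_p) :
  (forall j, 0 <= q 0 j) -> 0 <= (w^T *m diag_mx q *m w) 0 0.
Proof.
move=> q_ge0; rewrite diag_form.
by apply: sumr_ge0 => j _; rewrite mulr_ge0 ?q_ge0 ?sqr_ge0.
Qed.

Lemma diag_form_eq0 (R : realDomainType) p (q : 'rV[R]_p) (w : 'cV[R]_p) :
  (forall j, 0 < q 0 j) -> (w^T *m diag_mx q *m w) 0 0 = 0 -> w = 0.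
Proof.
move=> q_gt0; have terms_ge0 j : true -> 0 <= q 0 j * w j 0 ^+ 2.
  by move=> _; rewrite mulr_ge0 ?sqr_ge0 // ltW.
rewrite diag_form => /(psumr_eq0P terms_ge0) terms0.
apply/matrixP => j k; rewrite ord1 mxE; apply/eqP; rewrite -sqrf_eq0.
have /eqP := terms0 j isT.
by rewrite mulf_eq0 gt_eqF.
Qed.

Lemma cost_taylor (R : fieldType) p (Q : 'M[R]_p) (r v w : 'cV[R]_p) s :
  Q^T = Q -> (2 : R) != 0 ->
  cost Q r s (v + w) =
    cost Q r s v + ((Q *m v + r)^T *m w) 0 0 + 2^-1 * (w^T *m Q *m w) 0 0.
Proof.
move=> Q_sym two_neq0.
have entryD (A B : 'M[R]_1) : (A + B) 0 0 = A 0 0 + B 0 0 by rewrite mxE.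
have wQv : (w^T *m Q *m v) 0 0 = (v^T *m Q *m w) 0 0.
  transitivity ((v^T *m Q *m w)^T 0 0); last by rewrite mxE.
  by rewrite !trmx_mul trmxK Q_sym mulmxA.
rewrite /cost !linearD /= !(mulmxDl, mulmxDr) !entryD wQv trmx_mul Q_sym.
by field.
Qed.

Lemma cost_gap (R : fieldType) p (Q : 'M[R]_p) (r v u : 'cV[R]_p) s (k : 'M_1) :
  Q^T = Q -> (2 : R) != 0 -> Q *m v + r = const_mx 1 *m k ->
  (const_mx 1 : 'rV[R]_p) *m u = const_mx 1 *m v ->
  cost Q r s u = cost Q r s v + 2^-1 * ((u - v)^T *m Q *m (u - v)) 0 0.
Proof.
move=> Q_sym two_neq0 grad_v sum_uv.
rewrite -{1}(subrK v u) addrC cost_taylor // grad_v trmx_mul trmx_const.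
by rewrite -[k^T *m _ *m _]mulmxA mulmxBr sum_uv subrr mulmx0 mxE addr0.
Qed.

Lemma diag_cost_leif (R : realFieldType) p (q : 'rV[R]_p) (r v u : 'cV[R]_p) s
    (k : 'M_1) :
  (forall j, 0 < q 0 j) -> diag_mx q *m v + r = const_mx 1 *m k ->
  (const_mx 1 : 'rV[R]_p) *m u = const_mx 1 *m v ->
  cost (diag_mx q) r s v <= cost (diag_mx q) r s u ?= iff (u == v).
Proof.
move=> q_gt0 grad_v sum_uv.
have q_ge0 j : 0 <= q 0 j by exact: ltW.
rewrite (cost_gap s (tr_diag_mx q) _ grad_v sum_uv) ?pnatr_eq0 //.
split; first by rewrite lerDl mulr_ge0 ?invr_ge0 ?ler0n ?diag_form_ge0.
rewrite -subr_eq0 opprD addNKr oppr_eq0 mulf_eq0 invr_eq0 pnatr_eq0 /=.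
apply/eqP/eqP => [/(diag_form_eq0 q_gt0)/subr0_eq //|->].
by rewrite subrr mulmx0 mxE.
Qed.

Section Multiplier.
Variables (R : fieldType) (n p : nat) (E : 'M[R]_(n, p)) (Q : 'M[R]_p).
Variables (d : 'cV[R]_n) (r : 'cV[R]_p).
Hypothesis ones_E : (const_mx 1 : 'rV[R]_n) *m E = const_mx 1.
Hypothesis Q_unit : Q \in unitmx.
Let c := ((const_mx 1 : 'rV[R]_p) *m invmx Q *m (const_mx 1 : 'cV[R]_p)) 0 0.
Hypothesis c_neq0 : c != 0.
Let k : 'M_1 := c^-1 *: ((const_mx 1 : 'rV[R]_n) *m (d + E *m invmx Q *m r)).

Definition multiplier : 'cV[R]_p :=
  c^-1 *: (E^T *m ((const_mx 1 : 'cV[R]_n) *m (const_mx 1 : 'rV[R]_n))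
             *m (d + E *m invmx Q *m r)).

Lemma multiplierE : multiplier = const_mx 1 *m k.
Proof.
have E_ones : E^T *m const_mx 1 = const_mx 1 :> 'cV[R]_p.
  by apply: trmx_inj; rewrite trmx_mul trmxK !trmx_const ones_E.
by rewrite /multiplier mulmxA E_ones -mulmxA scalemxAr.
Qed.

Lemma multiplier_grad :
  Q *m (invmx Q *m (multiplier - r)) + r = const_mx 1 *m k.
Proof. by rewrite mulKVmx // subrK multiplierE. Qed.

Lemma multiplier_balance :
  (const_mx 1 : 'rV[R]_p) *m (invmx Q *m (multiplier - r)) = const_mx 1 *m d.
Proof.
rewrite multiplierE !mulmxBr !mulmxA [_ *m invmx Q *m _]mx11_scalar -/c.
rewrite mul_scalar_mx scalerA mulfV // scale1r mulmxDr !mulmxA.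
by rewrite ones_E addrK.
Qed.

End Multiplier.

Lemma ones_invdiag_ones_gt0 (R : realFieldType) p (q : 'rV[R]_p) :
  (0 < p)%N -> (forall j, 0 < q 0 j) ->
  0 < ((const_mx 1 : 'rV[R]_p) *m invmx (diag_mx q) *m const_mx 1) 0 (0 : 'I_1).
Proof.
move=> p_gt0 q_gt0; have invq_gt0 j : 0 < (\row_j (q 0 j)^-1) 0 j.
  by rewrite mxE invr_gt0.
rewrite -(trmx_const p 1 (1 : R)) invmx_diag => [|j]; last by rewrite gt_eqF.
rewrite lt0r diag_form_ge0 ?andbT => [|j]; last exact: ltW.
apply/eqP => /(diag_form_eq0 invq_gt0)/matrixP/(_ (Ordinal p_gt0) 0)/eqP.
by rewrite !mxE oner_eq0.
Qed.

Theorem lemma3 (R : realFieldType) (n m p : nat)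
  (ends : 'I_m -> 'I_n * 'I_n)
  (Hloop : forall k, (ends k).1 != (ends k).2)
  (Hsimple : forall k l, ends k = ends l \/ ends k = ((ends l).2, (ends l).1) -> k = l)
  (Hconn : forall x y : 'I_n, connect (graph_adj ends) x y)
  (Hp : (1 <= p)%N) (Hpn : (p <= n)%N)
  (d : 'cV[R]_n) (q : 'rV[R]_p) (Hq : forall j, 0 < q 0 j)
  (r : 'cV[R]_p) (s : R) :
  let B : 'M[R]_(n, m) := incidence R ends in
  let E : 'M[R]_(n, p) := selE R n p in
  let Q : 'M[R]_p := diag_mx q in
  let C := cost Q r s in
  let kappa : 'cV[R]_p :=
    (((const_mx 1 : 'rV[R]_p) *m invmx Q *m (const_mx 1 : 'cV[R]_p)) 0 0)^-1 *:
      (E^T *m ((const_mx 1 : 'cV[R]_n) *m (const_mx 1 : 'rV[R]_n))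
           *m (d + E *m invmx Q *m r)) in
  let ubar := invmx Q *m (kappa - r) in
  (exists lam : 'cV[R]_m, 0 = - (B *m lam) + E *m ubar - d) /\
  (forall (u : 'cV[R]_p) (lam : 'cV[R]_m),
      0 = - (B *m lam) + E *m u - d -> C ubar <= C u) /\
  (forall (u : 'cV[R]_p) (lam : 'cV[R]_m),
      0 = - (B *m lam) + E *m u - d -> C u <= C ubar -> u = ubar).
Proof.
move=> B E Q C kappa ubar.
have ones_E := ones_mul_selE R Hpn.
have Q_unit : Q \in unitmx by apply: unitmx_diag => j; rewrite gt_eqF.
have c_neq0 := lt0r_neq0 (ones_invdiag_ones_gt0 Hp Hq).
have optimal u : (const_mx 1 : 'rV[R]_p) *m u = const_mx 1 *m d ->
    C ubar <= C u ?= iff (u == ubar).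
  move=> sum_u; apply: diag_cost_leif Hq (multiplier_grad d r ones_E Q_unit) _.
  by rewrite sum_u (multiplier_balance d r ones_E c_neq0).
split.
  apply/(flow_feasibleP Hloop Hconn Hpn).
  exact: multiplier_balance d r ones_E c_neq0.
split=> u lam /(ex_intro _ lam)/(flow_feasibleP Hloop Hconn Hpn).
  by case/optimal.
case/optimal=> Cu_ge Cu_eq Cu_le; apply/eqP.
by rewrite -Cu_eq eq_le Cu_ge Cu_le.
Qed.
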